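(* Let $\lambda$ be a composition of $n$ and $a<b$ two peaks of $\lambda$. Then $$\mathbb{P}_\lambda(1\in\lambda_{>a,<b})\le2\,\frac{b-a}{n}.$$
   Context: A composition $\lambda$ of $n$ is encoded by its descent set $D_\lambda\subset[1,n-1]$; a cell $i\in[1,n]$ is a peak if $i\in D_\lambda\cup\{n\}$ and $i-1\notin D_\lambda$. $\mathbb{P}_\lambda(1\in\lambda_{>a,<b})$ is the probability that, for $\sigma$ uniform on $\{\sigma\in\mathfrak{S}_n: des(\sigma)=D_\lambda\}$ ($des(\sigma)=\{i:\sigma(i+1)<\sigma(i)\}$), the position $\sigma^{-1}(1)$ of the letter $1$ satisfies $a<\sigma^{-1}(1)<b$. *)

(* Permutations of [1,n] are modelled by 'S_n acting on
   'I_n = {0,...,n-1}; position i (1-indexed) is ordinal i-1, letter k is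
   ordinal k-1. *)
From mathcomp Require Import all_boot all_order all_fingroup all_algebra.
Set Implicit Arguments. Unset Strict Implicit. Unset Printing Implicit Defensive.
Import GRing.Theory Num.Theory.

(* value (0-indexed) of sigma at the 0-indexed position k, or 0 if k >= n *)
Definition val_at (n : nat) (s : 'S_n) (k : nat) : nat :=
  if insub k is Some i then val (s i) else 0.

(* i (1-indexed, in [1,n-1]) is a descent of s: s(i+1) < s(i) *)
Definition is_des (n : nat) (s : 'S_n) (i : nat) : bool :=
  (0 < i < n) && (val_at s i < val_at s i.-1).

Definition has_des (n : nat) (D : pred nat) (s : 'S_n) : bool :=
  [forall i : 'I_n, is_des s i == D i].

Definition pos1 (n : nat) (s : 'S_n) : nat :=
  if insub 0 is Some z then (val ((s^-1)%g z)).+1 else 0.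

(* i in [1,n] is a peak of the composition with descent set D *)
Definition is_peak (n : nat) (D : pred nat) (i : nat) : bool :=
  [&& 1 <= i <= n, D i || (i == n) & ~~ D i.-1].

Definition prob_one_between (n : nat) (D : pred nat) (a b : nat) : rat :=
  (#|[set s : 'S_n | has_des D s && (a < pos1 s < b)%N]|%:R
   / #|[set s : 'S_n | has_des D s]|%:R)%R.

(* Write W for the closed window of positions [a, b] and, for a letter j,
   N(j) for the number of permutations with descent set D whose letter j sits
   in W.  If j sits in W and j+1 does not, exchanging the values j and j+1
   keeps the descent set: the two letters are not in adjacent positions
   unless they straddle a boundary of W, and there a descent at b and an
   ascent at a-1 forbid it.  This injection gives N(j) <= N(j+1), so N(1) is
   the smallest of the N(j); and summing N(j) over all letters counts every
   permutation once for each position of W, whence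
   n N(1) <= (b - a + 1) |B| <= 2 (b - a) |B|. *)
Set Warnings "-notation-overridden,-ambiguous-paths".
From mathcomp Require Import all_boot all_order all_fingroup all_algebra.
From mathcomp Require Import zify.
Import GRing.Theory Num.Theory.
Set Implicit Arguments. Unset Strict Implicit.

Lemma val_atE n (s : 'S_n) (x : 'I_n) : val_at s x = val (s x).
Proof. by rewrite /val_at valK. Qed.

Lemma tperm_adjacent_ltE n (x y u v : 'I_n) : val y = (val x).+1 ->
  ~~ ((u == x) && (v == y)) -> ~~ ((u == y) && (v == x)) -> u != v ->
  (val (tperm x y u) < val (tperm x y v)) = (val u < val v).
Proof.
move=> xy not_xy not_yx uv.
have tpermE (w : 'I_n) : val (tperm x y w) =
    if val w == val x then val y else if val w == val y then val x else val w.
  case: tpermP => [->|->|nx ny]; rewrite ?eqxx //.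
    by rewrite xy; case: eqP => //; lia.
  by case: eqP => [/val_inj//|_]; case: eqP => [/val_inj//|_].
have val_neq (w w' : 'I_n) : (w != w') = (val w != val w') by [].
rewrite !tpermE; move: not_xy not_yx uv; rewrite !negb_and !val_neq xy.
by do ! case: eqP => //=; lia.
Qed.

Lemma has_des_mul_tperm n (D : pred nat) (a b : nat) (a_gt0 : 0 < a)
  (asc_a : ~~ D a.-1) (des_b : D b || (b == n)) (ab : a < b)
  (s : 'S_n) (x y : 'I_n) :
  has_des D s -> val y = (val x).+1 ->
  a <= ((s^-1)%g x).+1 <= b -> ~~ (a <= ((s^-1)%g y).+1 <= b) ->
  has_des D (s * tperm x y)%g.
Proof.
move=> /forallP des_s xy x_in y_out.
apply/forallP => i; rewrite -(eqP (des_s i)); apply/eqP.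
rewrite /is_des; case: i => [[|i] lt_i1n] //=.
have lt_in : i < n by apply: ltnW.
have := des_s (Ordinal lt_i1n); rewrite /is_des /=.
rewrite (val_atE _ (Ordinal lt_i1n)) (val_atE _ (Ordinal lt_in)) => des_i.
rewrite (val_atE _ (Ordinal lt_i1n)) (val_atE _ (Ordinal lt_in)) !permM.
set q := Ordinal lt_i1n; set p := Ordinal lt_in.
have sq_neq_sp : s q != s p by apply/eqP => /perm_inj /(congr1 val) /=; lia.
case: (boolP ((s q == x) && (s p == y))) => [/andP[/eqP sq /eqP sp]|not_xy].
  exfalso; move: x_in y_out des_i; rewrite -sq -sp !permK /= sq sp xy ltnSn lt_i1n /=.
  move=> x_in y_out /eqP des_i; have ea : a = i.+2 by lia.
  by rewrite ea /= -des_i in asc_a.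
case: (boolP ((s q == y) && (s p == x))) => [/andP[/eqP sq /eqP sp]|not_yx].
  exfalso; move: x_in y_out des_i; rewrite -sq -sp !permK /= sq sp xy lt_i1n /=.
  move=> x_in y_out; have eb : b = i.+1 by lia.
  move: des_b; rewrite eb (_ : (i.+1 == n) = false); last by apply/eqP; lia.
  by rewrite orbF => ->; rewrite (_ : ((val x).+1 < val x) = false) //; lia.
by rewrite tperm_adjacent_ltE.
Qed.

Section LetterInWindow.

Variables (n : nat) (B : {set 'S_n}) (W : pred 'I_n).

Definition letter_in_window (j : 'I_n) : {set 'S_n} := [set s in B | W ((s^-1)%g j)].

Lemma card_letter_in_window_tperm (x y : 'I_n) :
  (forall s, s \in B -> W ((s^-1)%g x) -> ~~ W ((s^-1)%g y) ->
     (s * tperm x y)%g \in B) ->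
  #|letter_in_window x| <= #|letter_in_window y|.
Proof.
move=> closedB.
have inv_y (s : 'S_n) : (((s * tperm x y)%g : 'S_n)^-1)%g y = (s^-1)%g x.
  by rewrite invMg tpermV permM tpermR.
have inv_x (s : 'S_n) : (((s * tperm x y)%g : 'S_n)^-1)%g x = (s^-1)%g y.
  by rewrite invMg tpermV permM tpermL.
pose f (s : 'S_n) := if W ((s^-1)%g y) then s else (s * tperm x y)%g.
rewrite -(card_in_imset (f := f)); last first.
  move=> s1 s2; rewrite !inE => /andP[_ W1] /andP[_ W2]; rewrite /f.
  case: ifP => h1; case: ifP => h2 //; last by move/mulIg.
    by move=> E; move: W1; rewrite E inv_x h2.
  by move=> E; move: W2; rewrite -E inv_x h1.
apply/subset_leq_card/subsetP => t /imsetP[s]; rewrite inE => /andP[Bs Ws] ->.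
by rewrite /f inE; case: ifP => h; rewrite ?Bs ?h // closedB ?h // inv_y.
Qed.

Lemma sum_card_letter_in_window :
  \sum_(j < n) #|letter_in_window j| = #|W| * #|B|.
Proof.
have cardE j : #|letter_in_window j| = \sum_(s in B) (W ((s^-1)%g j) : nat).
  rewrite -sum1_card big_mkcond [RHS]big_mkcond /=; apply: eq_bigr => s _.
  by rewrite inE; case: (s \in B); case: (W _).
rewrite (eq_bigr _ (fun j _ => cardE j)) exchange_big /= mulnC -sum_nat_const.
apply: eq_bigr => s _; rewrite (reindex_inj (@perm_inj _ s)) /=.
rewrite -sum1_card [RHS]big_mkcond /=; apply: eq_bigr => j _.
by rewrite permK -topredE /=; case: (W j).
Qed.

Lemma card_letter_in_window_first (z : 'I_n) : val z = 0 ->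
  (forall (x y : 'I_n) s, val y = (val x).+1 -> s \in B ->
     W ((s^-1)%g x) -> ~~ W ((s^-1)%g y) -> (s * tperm x y)%g \in B) ->
  n * #|letter_in_window z| <= #|W| * #|B|.
Proof.
move=> z0 closedB; rewrite -sum_card_letter_in_window.
rewrite -[X in X * _]card_ord -sum_nat_const; apply: leq_sum => -[k lt_kn] _.
elim: k lt_kn => [|k IHk] lt_kn; first by rewrite (_ : Ordinal lt_kn = z) //; exact: val_inj.
have lt_k'n : k < n by lia.
apply: (leq_trans (IHk lt_k'n)); apply: card_letter_in_window_tperm => s.
exact: (closedB (Ordinal lt_k'n) (Ordinal lt_kn)).
Qed.

End LetterInWindow.

Lemma card_window_le n (a b : nat) :
  #|[pred z : 'I_n | a <= z.+1 <= b]| <= b.+1 - a.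
Proof.
rewrite cardE -(size_map val) -(size_iota a.-1 (b.+1 - a)).
apply: uniq_leq_size; first by rewrite map_inj_uniq ?enum_uniq //; apply: val_inj.
move=> t /mapP[z]; rewrite mem_enum inE => /andP[? ?] ->; rewrite mem_iota /=; lia.
Qed.

Unset Implicit Arguments.
Set Strict Implicit.

Theorem lemma22 (n : nat) (D : pred nat)
  (hD : forall i, D i -> 0 < i < n)
  (a b : nat) (ha : is_peak n D a) (hb : is_peak n D b) (hab : a < b) :
  (prob_one_between n D a b <= 2%:R * (b - a)%:R / n%:R)%R.
Proof.
move: ha hb => /and3P[/andP[a_gt0 _] _ asc_a] /and3P[/andP[_ b_le_n] des_b _].
have n_gt0 : 0 < n by lia.
pose z0 : 'I_n := Ordinal n_gt0.
pose B := [set s : 'S_n | has_des D s].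
pose W := [pred z : 'I_n | a <= z.+1 <= b].
have window_count : n * #|letter_in_window B W z0| <= #|W| * #|B|.
  apply: card_letter_in_window_first => // x y s xy; rewrite !inE => des_s.
  exact: (has_des_mul_tperm a_gt0 asc_a des_b hab des_s xy).
have open_sub_closed : #|[set s : 'S_n | has_des D s && (a < pos1 s < b)]|
    <= #|letter_in_window B W z0|.
  apply/subset_leq_card/subsetP => s; rewrite !inE /pos1 => /andP[-> /=].
  case: insubP => [u _ u0|]; last by rewrite n_gt0.
  by rewrite (_ : u = z0) ?inE; [case/andP => /ltnW -> /ltnW -> | apply: val_inj].
rewrite /prob_one_between -/B.
set E := #|[set s : 'S_n | _]| in open_sub_closed *; set N := #|B| in window_count *.
have count_le : E * n <= 2 * (b - a) * N.
  rewrite mulnC; apply: (leq_trans (leq_mul (leqnn n) open_sub_closed)).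
  apply: (leq_trans window_count); apply: leq_mul => //.
  by apply: (leq_trans (card_window_le n a b)); lia.
have [->|N_gt0] := posnP N; first by rewrite invr0 mulr0 !mulr_ge0 ?invr_ge0.
rewrite ler_pdivrMr ?ltr0n // mulrAC ler_pdivlMr ?ltr0n //.
by rewrite -!natrM ler_nat.
Qed.
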